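(* Let $d\ge 1$, let $s$ be an integer with $1<s<2^d$, write $s=j\cdot 2^k$ with $j$ odd and $k\ge 0$, and let $n\ge d+1$. Then for every $A\subseteq\mathbb{F}_2^n$, \[\lambda^*(n,d,s,A)\le 1-\frac{2^{d-k}-1}{2^{d+1}-1}.\]
   Context: For integers $n\ge d\ge 1$, a $d$-flat in $\mathbb{F}_2^n$ is a set $x_0+U$ with $x_0\in\mathbb{F}_2^n$ and $U$ a $d$-dimensional linear subspace of $\mathbb{F}_2^n$. For $A\subseteq\mathbb{F}_2^n$ and an integer $0\le s\le 2^d$, $\lambda^*(n,d,s,A)$ denotes the fraction of $d$-flats $Q$ in $\mathbb{F}_2^n$ with $|Q\cap A|=s$. *)

From mathcomp Require Import all_boot all_order all_algebra.
Set Implicit Arguments. Unset Strict Implicit. Unset Printing Implicit Defensive.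
Import GRing.Theory Num.Theory.
Local Open Scope ring_scope.

Notation F2vec n := 'rV['F_2]_n.

Definition rowspace_set n (M : 'M['F_2]_n) : {set F2vec n} :=
  [set v : F2vec n | (v <= M)%MS].

(* All d-flats x0 + U of F_2^n, U a d-dimensional linear subspace
   (= row space of some n x n matrix of rank d). Each flat appears once. *)
Definition flats (n d : nat) : {set {set F2vec n}} :=
  [set [set x0 + u | u in rowspace_set M]
     | x0 in [set: F2vec n], M in [set M : 'M['F_2]_n | \rank M == d]].

Definition lambda_star n d (s : nat) (A : {set F2vec n}) : rat :=
  (#|[set Q in flats n d | #|Q :&: A| == s]|%:R / #|flats n d|%:R)%R.

From mathcomp Require Import all_boot all_order all_algebra.
From mathcomp Require Import zify ring lra.
Set Implicit Arguments. Unset Strict Implicit. Unset Printing Implicit Defensive.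
Import GRing.Theory Num.Theory.
Local Open Scope ring_scope.

(* A d-flat is encoded as an affine hyperplane {x + uC | u.c = e} (c != 0) of a
   (d+1)-flat x + rowspace C.  Affine maps act transitively on d-flats, so every
   d-flat has the same number of encodings and lambda^* is the proportion of good
   encodings.  Fix the (d+1)-flat and pull A back to B in F_2^(d+1).  If |B| <> 2s,
   each direction c has at most one good hyperplane.  If |B| = 2s, the two
   hyperplanes of c are good or bad together, and the set S of bad directions
   (which contains 0) is large: a maximal subspace W meeting S only in 0 satisfies
   S + W = F_2^(d+1), while counting sum_(c in W) |B /\ c^perp| in two ways shows
   that 2^(dim W) divides 2s = j 2^(k+1); hence dim W <= k+1 and |S| >= 2^(d-k). *)

Lemma pchar_F2 : 2 \in [pchar 'F_2].
Proof. exact: pchar_Fp. Qed.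

Lemma F2_cases (x : 'F_2) : x = 0 \/ x = 1.
Proof. by case: x => [[|[|]]] //= ?; [left|right]; apply/val_inj. Qed.

Lemma F2_neq0 (x : 'F_2) : (x != 0) = (x == 1).
Proof. by case: (F2_cases x) => ->. Qed.

Lemma oppmx_F2 p q (A : 'M['F_2]_(p, q)) : - A = A.
Proof. by apply/matrixP => i j; rewrite mxE oppr_pchar2 // pchar_F2. Qed.

Lemma addmxK_F2 p q (A B : 'M['F_2]_(p, q)) : A + B + B = A.
Proof. by rewrite -{2}(oppmx_F2 B) addrK. Qed.

Lemma card_rowspace (F : finFieldType) p m (W : 'M[F]_(p, m)) :
  #|[set v : 'rV_m | (v <= W)%MS]| = (#|F| ^ \rank W)%N.
Proof.
have -> : [set v : 'rV_m | (v <= W)%MS] = [set u *m row_base W | u in [set: 'rV_(\rank W)]].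
  apply/setP => v; rewrite inE; apply/idP/imsetP => [vW | [u _ ->]].
    by exists (v *m pinvmx (row_base W)); rewrite ?inE // mulmxKpV ?eq_row_base.
  by rewrite -(eq_row_base W) submxMl.
by rewrite card_imset ?cardsT ?card_mx ?mul1n //; apply/row_free_inj/row_base_free.
Qed.

Lemma card_le_sumset (F : finFieldType) m (S : {set 'rV[F]_m}) (W : 'M[F]_m) :
  (forall phi, exists2 c, c \in S & (phi - c <= W)%MS) ->
  (#|F| ^ m <= #|S| * #|F| ^ \rank W)%N.
Proof.
move=> cover; rewrite -card_rowspace -cardsX.
have -> : (#|F| ^ m)%N = #|[set: 'rV[F]_m]| by rewrite cardsT card_mx mul1n.
apply: leq_trans (leq_imset_card (fun cw : 'rV_m * 'rV_m => cw.1 + cw.2) _).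
apply/subset_leq_card/subsetP => phi _; have [c cS cW] := cover phi.
by apply/imsetP; exists (c, phi - c); rewrite ?inE ?cS //= addrC subrK.
Qed.

Lemma exists_avoiding_cover m (S : {set 'rV['F_2]_m}) : 0 \in S ->
  exists W : 'M['F_2]_m, (forall c, (c <= W)%MS -> c \in S -> c = 0) /\
    (forall phi, exists2 c, c \in S & (phi - c <= W)%MS).
Proof.
move=> S0.
pose avoids (W : 'M['F_2]_m) := [forall c, (c <= W)%MS && (c \in S) ==> (c == 0)].
have avoids0 : avoids 0 by apply/forallP => c; apply/implyP => /andP[]; rewrite submx0.
have [W avW Wmax] := arg_maxnP (fun W => \rank W) avoids0.
have avoidsW c : (c <= W)%MS -> c \in S -> c = 0.
  by move=> cW cS; apply/eqP; move/forallP/(_ c)/implyP: avW; apply; rewrite cW.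
exists W; split=> // phi; have [phiW | phiNW] := boolP (phi <= W)%MS.
  by exists 0; rewrite ?subr0.
have lt_rank : (\rank W < \rank (W + phi)%MS)%N.
  have : (W < W + phi)%MS; last by rewrite ltmxErank => /andP[].
  rewrite ltmxE addsmxSl; apply: contra phiNW; exact: submx_trans (addsmxSr _ _).
have : ~~ avoids (W + phi)%MS by apply: contraTN lt_rank; rewrite -leqNgt; exact: Wmax.
rewrite /avoids => /forallPn[c]; rewrite negb_imply => /andP[/andP[/sub_addsmxP[[u a] /= cE] cS] c0].
rewrite [a]mx11_scalar mul_scalar_mx in cE.
case: (F2_cases (a 0 0)) => a1; rewrite a1 ?scale0r ?scale1r ?addr0 in cE.
  by rewrite (avoidsW c) ?eqxx // cE submxMl in c0.
by exists c; rewrite // cE opprD addrC subrK -mulNmx submxMl.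
Qed.

Lemma pow2_dvd_odd r t j : odd j -> (2 ^ r %| j * 2 ^ t)%N -> (r <= t)%N.
Proof.
move=> oj; rewrite leqNgt; apply: contraL => lt_tr.
apply: contraL oj => /(dvdn_trans (dvdn_exp2l 2 lt_tr)).
by rewrite expnS mulnC [(j * _)%N]mulnC dvdn_pmul2l ?expn_gt0 // dvdn2.
Qed.

Lemma big_F2 (R : Type) (idx : R) (op : Monoid.law idx) (f : 'F_2 -> R) :
  \big[op/idx]_(e : 'F_2) f e = op (f 0) (f 1).
Proof. by rewrite big_ord_recl big_ord1; congr (op (f _) (f _)); apply/val_inj. Qed.

Lemma card_setX_F2 (T : finType) (P : T -> 'F_2 -> bool) :
  #|[set te : T * 'F_2 | P te.1 te.2]| = (#|[set t | P t 0%R]| + #|[set t | P t 1%R]|)%N.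
Proof.
rewrite -!sum1_card !(big_mkcond (mem [set _ | _])) /=; under eq_bigr do rewrite inE.
rewrite -(pair_bigA _ (fun t e => if P t e then 1%N else 0%N)) -big_split /=.
by apply: eq_bigr => t _; rewrite big_F2 !inE.
Qed.

Lemma card_set_sum (T : finType) (A : {set T}) (P : pred T) :
  #|[set x in A | P x]| = (\sum_(x in A) P x)%N.
Proof.
rewrite -sum1_card big_mkcond [RHS]big_mkcond /=.
by apply: eq_bigr => x _; rewrite inE; case: (x \in A); case: (P x).
Qed.

Section HyperplaneCounts.
Variable m : nat.
Implicit Types (u c : 'rV['F_2]_m) (W : 'M['F_2]_m).

Definition dot u c : 'F_2 := (u *m c^T) 0 0.

Lemma dotDl u1 u2 c : dot (u1 + u2) c = dot u1 c + dot u2 c.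
Proof. by rewrite /dot mulmxDl mxE. Qed.

Lemma dotDr u c1 c2 : dot u (c1 + c2) = dot u c1 + dot u c2.
Proof. by rewrite /dot linearD mulmxDr mxE. Qed.

Lemma dot0r u : dot u 0 = 0.
Proof. by rewrite /dot trmx0 mulmx0 mxE. Qed.

Lemma mem_rowspace_set W v : (v \in rowspace_set W) = (v <= W)%MS.
Proof. by rewrite inE. Qed.

Lemma dot_scalar u c : u *m c^T = (dot u c)%:M.
Proof. exact: mx11_scalar. Qed.

Lemma dot_surj c e : c != 0 -> exists u, dot u c = e.
Proof.
move=> c0; have /forallPn[i] : ~~ [forall i, c 0 i == 0].
  apply: contra c0 => /forallP ci0; apply/eqP/matrixP => a b.
  by rewrite [a]ord1 mxE; apply/eqP/ci0.
rewrite F2_neq0 => /eqP ci.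
by exists (e *: delta_mx 0 i); rewrite /dot -scalemxAl -rowE !mxE ci mulr1.
Qed.

Lemma card_rowspace_set W : #|rowspace_set W| = (2 ^ \rank W)%N.
Proof. by rewrite card_rowspace card_Fp. Qed.

Lemma card_dot0_rowspace u c1 W : (c1 <= W)%MS -> dot u c1 = 1 ->
  (#|[set c in rowspace_set W | dot u c == 0%R]| * 2 = 2 ^ \rank W)%N.
Proof.
move=> c1W uc1; set Z := [set c in rowspace_set W | _].
rewrite muln2 -addnn -card_rowspace_set -(cardsID [set c | dot u c == 0] (rowspace_set W)).
congr addn; first by apply: eq_card => c; rewrite !inE andbC.
rewrite -(card_imset Z (addIr c1)); apply: eq_card => v; rewrite !inE.
apply/imsetP/andP => [[c] | [uv vW]].
  by rewrite !inE => /andP[cW /eqP uc] ->; rewrite dotDr uc uc1 add0r addmx_sub.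
exists (v + c1); last by rewrite addmxK_F2.
move: uv; rewrite F2_neq0 !inE addmx_sub // dotDr uc1 => /eqP ->.
by rewrite addrr_pchar2 ?pchar_F2.
Qed.

Variable B : {set 'rV['F_2]_m}.

Definition hcount c e := #|[set u in B | dot u c == e]|.

Lemma hcount00 : hcount 0 0 = #|B|.
Proof. by apply: eq_card => u; rewrite !inE dot0r eqxx andbT. Qed.

Lemma hcount01 c : (hcount c 0%R + hcount c 1%R)%N = #|B|.
Proof.
rewrite -(cardsID [set u | dot u c == 0] B); congr addn.
  by apply: eq_card => u; rewrite !inE andbC.
by apply: eq_card => u; rewrite !inE -F2_neq0 andbC.
Qed.

Lemma sum_hcount_rowspace W :
  (2 * \sum_(c in rowspace_set W) hcount c 0%R =
   2 ^ \rank W * (#|B| + #|[set u in B | [forall c in rowspace_set W, dot u c == 0%R]]|))%N.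
Proof.
rewrite /hcount; under eq_bigr do rewrite card_set_sum.
rewrite exchange_big card_set_sum -sum1_card -big_split !big_distrr.
apply: eq_bigr => u _ /=; rewrite -card_set_sum mulnC.
have [perp | /forall_inPn[c1 c1W]] := boolP [forall c in rowspace_set W, dot u c == 0].
  suff -> : [set c in rowspace_set W | dot u c == 0] = rowspace_set W.
    by rewrite card_rowspace_set.
  by apply/setP => c; rewrite inE andb_idr //; move/forall_inP: perp; apply.
rewrite F2_neq0 => /eqP uc1; rewrite inE in c1W.
by rewrite (card_dot0_rowspace c1W uc1) muln1.
Qed.

Lemma pow2_rank_dvd W s : #|B| = (2 * s)%N ->
  (forall c, (c <= W)%MS -> c != 0 -> hcount c 0 = s) -> (2 ^ \rank W %| 2 * s)%N.
Proof.
move=> cardB hW; have := sum_hcount_rowspace W.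
rewrite (bigD1 0) ?mem_rowspace_set ?sub0mx //= hcount00.
rewrite (eq_bigr (fun _ => s)) => [|c /andP[cW]]; last by apply: hW; rewrite -mem_rowspace_set.
rewrite sum_nat_const.
have -> : #|[pred c in rowspace_set W | c != 0]| = (2 ^ \rank W).-1.
  rewrite -card_rowspace_set [in RHS](cardD1 0) mem_rowspace_set sub0mx add1n /=.
  by apply: eq_card => c; rewrite !inE andbC.
rewrite cardB => E.
apply/dvdnP; exists #|[set u in B | [forall c in rowspace_set W, dot u c == 0]]|.
by move: E; case: (2 ^ \rank W)%N => [|R] /=; nia.
Qed.

Lemma card_hcount_neq s j k : (0 < s)%N -> odd j -> s = (j * 2 ^ k)%N ->
  #|B| = (2 * s)%N -> (2 ^ m <= #|[set c | hcount c 0%R != s]| * 2 ^ k.+1)%N.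
Proof.
move=> s_gt0 oj sE cardB; set S := [set c | _].
have S0 : 0 \in S by rewrite inE hcount00 cardB; lia.
have [W [WS coverS]] := exists_avoiding_cover S0.
have hW c : (c <= W)%MS -> c != 0 -> hcount c 0 = s.
  by move=> cW; apply: contraNeq => cS; apply/eqP/(WS c cW); rewrite inE.
have rankW : (\rank W <= k.+1)%N.
  by apply: (pow2_dvd_odd oj); rewrite expnS mulnCA -sE pow2_rank_dvd.
have := card_le_sumset coverS; rewrite card_Fp // => /leq_trans; apply.
by rewrite leq_mul2l leq_exp2l ?rankW ?orbT.
Qed.

Definition hyperplanes_hitting s : {set 'rV['F_2]_m * 'F_2} :=
  [set ce | (ce.1 != 0) && (hcount ce.1 ce.2 == s)].

Lemma card_hyperplanes_hitting s j k :
  (0 < s)%N -> odd j -> s = (j * 2 ^ k)%N -> (k < m)%N ->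
  (#|hyperplanes_hitting s| + 2 ^ (m - k) <= 2 * 2 ^ m)%N.
Proof.
move=> s_gt0 oj sE km.
rewrite (card_setX_F2 (fun c e => (c != 0) && (hcount c e == s))).
set X0 := [set c | _ && (hcount c 0 == s)]; set X1 := [set c | _ && (hcount c 1 == s)].
have mk : (2 ^ (m - k) <= 2 ^ m)%N by rewrite leq_exp2l ?leq_subr.
have card_rV : #|{: 'rV['F_2]_m}| = (2 ^ m)%N by rewrite card_mx card_Fp ?mul1n.
have [cardB | cardB] := eqVneq #|B| (2 * s)%N.
  have X10 : X1 = X0.
    apply/setP => c; rewrite !inE; congr (_ && _).
    by apply/eqP/eqP; have := hcount01 c; rewrite cardB; lia.
  pose S := [set c | hcount c 0 != s].
  have X0C : X0 \subset ~: S.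
    by apply/subsetP => c; rewrite !inE negbK => /andP[].
  have hS : (2 ^ (m - k) <= 2 * #|S|)%N.
    rewrite -(@leq_pmul2r (2 ^ k)) ?expn_gt0 // -expnD subnK; last exact: ltnW.
    rewrite -mulnA mulnCA -expnS; exact: card_hcount_neq s_gt0 oj sE cardB.
  have := subset_leq_card X0C; have := cardsC S.
  by rewrite card_rV X10; lia.
have X01 : X0 :&: X1 = set0.
  apply/setP => c; rewrite !inE; apply/negP => /andP[/andP[_ /eqP c0] /andP[_ /eqP c1]].
  by move: cardB; rewrite -(hcount01 c) c0 c1 addnn -mul2n eqxx.
have X01_nz : X0 :|: X1 \subset [set~ 0].
  by apply/subsetP => c; rewrite !inE => /orP[] /andP[].
have := subset_leq_card X01_nz; have := cardsUI X0 X1.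
by rewrite cardsC1 card_rV X01 cards0; lia.
Qed.

End HyperplaneCounts.

Lemma eqmx_rank_transport (F : fieldType) n (M M' : 'M[F]_n) : \rank M = \rank M' ->
  exists2 P : 'M[F]_n, P \in unitmx & (M *m P :=: M')%MS.
Proof.
move=> rkMM'; exists (invmx (row_ebase M) *m row_ebase M').
  by rewrite unitmx_mul unitmx_inv !row_ebase_unit.
have -> : M *m (invmx (row_ebase M) *m row_ebase M') =
          col_ebase M *m (pid_mx (\rank M') *m row_ebase M').
  by rewrite -{1}(mulmx_ebase M) !mulmxA mulmxK ?row_ebase_unit // rkMM' -mulmxA.
apply: eqmx_trans (eqmxMfull _ _) _; first by rewrite row_full_unit col_ebase_unit.
apply: eqmx_sym; rewrite -{1}(mulmx_ebase M') -mulmxA.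
by apply: eqmxMfull; rewrite row_full_unit col_ebase_unit.
Qed.

Lemma flats_transport n d (Q Q' : {set 'rV['F_2]_n}) :
  Q \in flats n d -> Q' \in flats n d ->
  exists a : 'rV_n, exists2 P : 'M_n, P \in unitmx & [set a + x *m P | x in Q] = Q'.
Proof.
case/imset2P => x0 M _; rewrite inE => /eqP rM ->.
case/imset2P => x1 M' _; rewrite inE => /eqP rM' ->.
have [P Pu MP] := eqmx_rank_transport (etrans rM (esym rM')).
exists (x1 - x0 *m P), P => //; apply/setP => y; apply/imsetP/imsetP.
  case=> _ /imsetP[u uM ->] ->; exists (u *m P); last by rewrite mulmxDl addrA subrK.
  by rewrite mem_rowspace_set -MP submxMr // -mem_rowspace_set.
case=> v; rewrite mem_rowspace_set => vM' ->; exists (x0 + v *m invmx P).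
  apply/imsetP; exists (v *m invmx P) => //.
  by rewrite mem_rowspace_set -(mulmxK Pu M) submxMr // MP.
by rewrite mulmxDl mulmxKV // addrA subrK.
Qed.

Section HyperplanesOfFlats.
Variables n d : nat.
Local Notation m := d.+1.
Local Notation param := (('rV['F_2]_n * 'M['F_2]_(m, n)) * ('rV['F_2]_m * 'F_2))%type.

Definition frames : {set 'rV['F_2]_n * 'M['F_2]_(m, n)} := [set xC | row_free xC.2].
Definition hyperplanes : {set 'rV['F_2]_m * 'F_2} := [set ce | ce.1 != 0].
Definition params : {set param} := setX frames hyperplanes.

Definition flat_of (p : param) : {set 'rV['F_2]_n} :=
  [set p.1.1 + u *m p.1.2 | u in [set u | dot u p.2.1 == p.2.2]].

Definition fiber Q := [set p in params | flat_of p == Q].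

Lemma flat_of_in_flats p : p \in params -> flat_of p \in flats n d.
Proof.
case: p => [[x C] [c e]]; rewrite !inE /= => /andP[Cfree c0].
have [u0 u0c] := dot_surj e c0; pose K := kermx c^T.
apply/imset2P; exists (x + u0 *m C) <<K *m C>>%MS; rewrite ?inE //.
  by rewrite genmxE mxrankMfree // mxrank_ker mxrank_tr rank_rV c0 subn1.
apply/setP => y; apply/imsetP/imsetP => [[u] | [v]].
  rewrite inE => /eqP uc ->; exists ((u - u0) *m C).
    by rewrite mem_rowspace_set genmxE submxMr // sub_kermx mulmxBl !dot_scalar uc u0c subrr.
  by rewrite mulmxBl [u *m C - _]addrC addrA addrK.
rewrite mem_rowspace_set genmxE => /submxP[w ->] ->; exists (u0 + w *m K).
  by rewrite inE dotDl u0c /dot -mulmxA mulmx_ker mulmx0 mxE addr0.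
by rewrite mulmxDl mulmxA addrA.
Qed.

Lemma card_fiber_le Q Q' : Q \in flats n d -> Q' \in flats n d -> (#|fiber Q| <= #|fiber Q'|)%N.
Proof.
move=> QF Q'F; have [a [P Pu PQ]] := flats_transport QF Q'F.
pose T (p : param) : param := ((a + p.1.1 *m P, p.1.2 *m P), p.2).
have Tinj : injective T.
  move=> [[x C] ce] [[x' C'] ce'] [/addrI xP CP ->].
  by rewrite (can_inj (mulmxK Pu) xP) (can_inj (mulmxK Pu) CP).
rewrite -(card_imset _ Tinj); apply/subset_leq_card/subsetP => _ /imsetP[[[x C] [c e]] pQ ->].
move: pQ; rewrite !inE /= => /andP[/andP[Cfree c0] /eqP pQ].
rewrite c0 andbT /row_free mxrankMfree ?row_free_unit //; rewrite /row_free in Cfree.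
rewrite Cfree -PQ -pQ /flat_of /= -imset_comp; apply/eqP/eq_imset => u /=.
by rewrite mulmxDl addrA mulmxA.
Qed.

Lemma card_fiber_eq Q Q' : Q \in flats n d -> Q' \in flats n d -> #|fiber Q| = #|fiber Q'|.
Proof. by move=> QF Q'F; apply/anti_leq; rewrite !card_fiber_le. Qed.

Lemma card_params_partition (X : {set param}) : X \subset params ->
  #|X| = (\sum_(Q in flats n d) #|[set p in X | flat_of p == Q]|)%N.
Proof.
move=> Xparams; rewrite -sum1_card (partition_big flat_of (mem (flats n d))) => [|p pX].
  by apply: eq_bigr => Q _; rewrite -sum1_card; apply: eq_bigl => p; rewrite inE.
by apply/flat_of_in_flats/(subsetP Xparams).
Qed.

Lemma card_flat_of_capE x C c e (A : {set 'rV['F_2]_n}) : row_free C ->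
  #|flat_of ((x, C), (c, e)) :&: A| = hcount [set u | x + u *m C \in A] c e.
Proof.
move=> Cfree; rewrite /hcount -(card_imset _ (row_free_inj Cfree)).
rewrite -[in RHS](card_imset _ (addrI x)) -imset_comp; apply: eq_card => y; rewrite !inE.
apply/andP/imsetP => [[/imsetP[u uce ->] yA] | [u]].
  by exists u; rewrite // !inE yA; rewrite inE in uce.
by rewrite !inE => /andP[uA uce] ->; split=> //; apply/imsetP; exists u; rewrite ?inE.
Qed.

Lemma pid_frame : (m <= n)%N -> (0, pid_mx m) \in frames.
Proof. by move=> mn; rewrite inE /row_free rank_pid_mx. Qed.

Lemma delta_hyperplane : (delta_mx 0 0, 0) \in hyperplanes.
Proof. by rewrite inE; apply: contraTneq isT => /matrixP/(_ 0 0); rewrite !mxE. Qed.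

Lemma card_hyperplanes : #|hyperplanes| = (2 * (2 ^ m).-1)%N.
Proof.
have -> : hyperplanes = setX [set~ 0] [set: 'F_2].
  by apply/setP => -[c e]; rewrite !inE andbT.
by rewrite cardsX cardsC1 cardsT card_mx card_Fp // mul1n mulnC.
Qed.

Lemma card_params : #|params| = (#|frames| * (2 * (2 ^ m).-1))%N.
Proof. by rewrite cardsX card_hyperplanes. Qed.

Lemma card_params_hitting_le s j k (A : {set 'rV['F_2]_n}) :
  (0 < s)%N -> odd j -> s = (j * 2 ^ k)%N -> (k < m)%N ->
  (#|[set p in params | #|flat_of p :&: A| == s]| + #|frames| * 2 ^ (m - k)
     <= #|frames| * (2 * 2 ^ m))%N.
Proof.
move=> s_gt0 oj sE km; rewrite card_set_sum /params.
rewrite (eq_bigl (fun p => (p.1 \in frames) && (p.2 \in hyperplanes))) => [|[? ?]];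
  last by rewrite in_setX.
rewrite -(pair_big_dep (mem frames) (fun _ => mem hyperplanes)
           (fun xC ce => (#|flat_of (xC, ce) :&: A| == s : nat))) /=.
rewrite -!sum_nat_const -big_split /=; apply: leq_sum => -[x C]; rewrite inE /= => Cfree.
rewrite -card_set_sum.
apply: leq_trans (card_hyperplanes_hitting [set u | x + u *m C \in A] s_gt0 oj sE km).
rewrite leq_add2r; apply/eq_leq/eq_card => -[c e].
by rewrite /hyperplanes_hitting !inE /= card_flat_of_capE.
Qed.

Lemma lambda_star_params (A : {set 'rV['F_2]_n}) s : (m <= n)%N ->
  lambda_star d s A = #|[set p in params | #|flat_of p :&: A| == s]|%:R / #|params|%:R.
Proof.
move=> mn; pose p0 : param := ((0, pid_mx m), (delta_mx 0 0, 0)).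
have p0_params : p0 \in params by rewrite in_setX pid_frame ?delta_hyperplane.
pose N := #|fiber (flat_of p0)|.
have fiberN Q : Q \in flats n d -> #|fiber Q| = N.
  by move=> QF; apply/card_fiber_eq/flat_of_in_flats.
have N_gt0 : (0 < N)%N by apply/card_gt0P; exists p0; rewrite inE p0_params eqxx.
have cardP : #|params| = (#|flats n d| * N)%N.
  rewrite (card_params_partition (subxx _)) -sum_nat_const.
  by apply: eq_bigr => Q QF; rewrite -(fiberN Q QF).
have cardG : #|[set p in params | #|flat_of p :&: A| == s]| =
             (#|[set Q in flats n d | #|Q :&: A| == s]| * N)%N.
  rewrite card_params_partition; last by apply/subsetP => p; rewrite inE => /andP[].
  rewrite -sum_nat_const big_mkcond [RHS]big_mkcond /=; apply: eq_bigr => Q _.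
  rewrite inE; case: ifP => //= QF; rewrite -(fiberN Q QF).
  have -> : [set p in [set p in params | #|flat_of p :&: A| == s] | flat_of p == Q] =
            if #|Q :&: A| == s then fiber Q else set0.
    apply/setP => p; rewrite /fiber; case: ifP => goodQ; rewrite !inE;
    by case: (eqVneq (flat_of p) Q) => [-> | _]; rewrite ?goodQ ?andbT ?andbF.
  by case: (#|Q :&: A| == s); rewrite ?cards0.
by rewrite /lambda_star cardP cardG !natrM -mulf_div divff ?mulr1 // pnatr_eq0 -lt0n.
Qed.

End HyperplanesOfFlats.

Lemma ratio_le_one_sub (G X P a : nat) : (0 < X)%N -> (1 < P)%N ->
  (G + X * (2 * a) <= X * (2 * P))%N ->
  G%:R / (X * (2 * P.-1))%:R <= 1 - (a%:R - 1) / (P%:R - 1 : rat).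
Proof.
move=> X_gt0 P_gt1 bound.
have P1 : P.-1%:R = P%:R - 1 :> rat.
  by rewrite -[in RHS](prednK (ltnW P_gt1)) -natr1 addrK.
have P1_gt0 : 0 < P%:R - 1 :> rat by rewrite -P1 ltr0n -ltnS prednK // ltnW.
rewrite mulnA natrM P1 ler_pdivrMr ?mulr_gt0 ?ltr0n ?muln_gt0 ?X_gt0 //.
have : G%:R + X%:R * (2 * a%:R) <= X%:R * (2 * P%:R) :> rat.
  by rewrite -(natrM _ 2) -!natrM -natrD ler_nat.
have -> : (1 - (a%:R - 1) / (P%:R - 1)) * ((X * 2)%:R * (P%:R - 1)) =
          (X * 2)%:R * (P%:R - a%:R) :> rat.
  by field; rewrite lt0r_neq0.
rewrite natrM; nra.
Qed.

Unset Implicit Arguments.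

Theorem proposition3p2 (d s j k n : nat) (A : {set 'rV['F_2]_n}) :
  (1 <= d)%N -> (1 < s)%N -> (s < 2 ^ d)%N ->
  odd j -> s = (j * 2 ^ k)%N -> (d + 1 <= n)%N ->
  lambda_star d s A <=
    1 - ((2 ^ (d - k))%:R - 1) / ((2 ^ (d + 1))%:R - 1 : rat).
Proof.
(* 1 <= d is implied by 1 < s < 2 ^ d. *)
move=> _ s_gt1 s_lt oj sE dn; rewrite addn1 in dn *.
have s_gt0 : (0 < s)%N by apply: ltnW.
have k_lt : (k < d.+1)%N.
  rewrite ltnS -(leq_exp2l _ _ (isT : 1 < 2)%N) ltnW // (leq_ltn_trans _ s_lt) // sE.
  by rewrite leq_pmull // odd_gt0.
have frames_gt0 : (0 < #|frames n d|)%N.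
  by apply/card_gt0P; exists (0, pid_mx d.+1); apply: pid_frame.
have := card_params_hitting_le A s_gt0 oj sE k_lt.
rewrite subSn // expnS => bound.
rewrite lambda_star_params // card_params.
by apply: ratio_le_one_sub bound; rewrite // -{1}(expn0 2) ltn_exp2l.
Qed.
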